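(* The map $\alpha:V_1\to Nat(id_{{^\mathscr C}Ctr},S_\psi T_\psi)$ sending $\sigma$ to the natural transformation $\tau$ with $\tau(\mathcal M)(X):\mathcal M(X)\xrightarrow{(\sigma_X,\mathcal M(X))}(A,\mathscr C(X,X),\mathcal M(X))\xrightarrow{(A,\pi_{XX})}(A,\mathcal M(X))$, and the map $\beta$ sending $\tau$ to $\sigma$ determined by $(\sigma_X,U)=\tau(\mathcal H_X^U)(X)\circ(\epsilon_X,U)$ for all $U\in Vect_K$, are mutually inverse isomorphisms. In particular $V_1\cong Nat(id_{{^\mathscr C}Ctr},S_\psi T_\psi)$.
   Context: $K$ is a field, $(U',U):=Hom_K(U',U)$, with iterated homs $(L_k,\dots,L_1):=(L_k,(L_{k-1},(\dots(L_2,L_1))))$ identified via hom-tensor adjunction. $\mathscr C$ is a coalgebra with several objects ($\delta_{XYZ}:\mathscr C(X,Z)\to\mathscr C(Y,Z)\otimes\mathscr C(X,Y)$, $f\mapsto f_{Y1}\otimes f_{Y2}$, counits $\epsilon_X$). $(\mathscr C,A,\psi)$ is an entwining structure: $A$ a $K$-algebra, $\psi_{XY}:\mathscr C(X,Y)\otimes A\to A\otimes\mathscr C(X,Y)$, $f\otimes a\mapsto a_\psi\otimes f^\psi$, with $a_\psi\otimes\delta_{XYZ}(f^\psi)=a_{\psi\psi}\otimes f_{Y1}^\psi\otimes f_{Y2}^\psi$, $(ab)_\psi\otimes f^\psi=a_\psi b_\psi\otimes f^{\psi\psi}$, $\psi(f\otimes1)=1\otimes f$, $a_\psi\epsilon_Z(g^\psi)=\epsilon_Z(g)a$.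 ${^\mathscr C}Ctr$ is the category of left $\mathscr C$-contramodules $(\mathcal M,\pi)$, $\pi_{XY}:(\mathscr C(X,Y),\mathcal M(Y))\to\mathcal M(X)$ (coassociative and counital), and ${_A^{\mathscr C}}Ctr(\psi)$ the category of entwined contramodules (contramodules with left $A$-module structures $\mu_X:\mathcal M(X)\to(A,\mathcal M(X))$ with $\mu_X\circ\pi_{XY}=(A,\pi_{XY})\circ(\psi_{XY},\mathcal M(Y))\circ(\mathscr C(X,Y),\mu_Y)$). $S_\psi$ is the forgetful functor and $T_\psi(\mathcal M)(X)=(A,\mathcal M(X))$ with contramodule structure $(A,\pi_{XY})\circ(\psi_{XY},\mathcal M(Y))$ and $A$-action from multiplication; $(S_\psi,T_\psi)$ is adjoint. $\mathcal H_X^U(Y)=(\mathscr C(Y,X),U)$ with structure maps induced by $\delta_{YZX}$. $V_1$ is the space of collections $\sigma=\{\sigma_X:\mathscr C(X,X)\otimes A\to K\}_{X}$ with $\sigma_Y(f_{Y1}\otimes a_\psi)f_{Y2}^\psi=\sigma_X(f_{X2}\otimes a)f_{X1}$ in $\mathscr C(X,Y)$ for all $f\in\mathscr C(X,Y)$, $a\in A$. *)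

From HB Require Import structures.
From mathcomp Require Import all_boot all_algebra.
From mathcomp Require Import boolp classical_sets functions.
Set Implicit Arguments. Unset Strict Implicit. Unset Printing Implicit Defensive.
Import GRing.Theory.
Local Open Scope ring_scope.

Section Hom.
Variables (K : fieldType) (U V : lmodType K).
Definition linb (f : U -> V) : bool := `[< linear f >].
Record khom := Hom { hom_fun :> U -> V; hom_lin : linb hom_fun }.
HB.instance Definition _ := [isSub for hom_fun].
HB.instance Definition _ := [Choice of khom by <:].

Lemma linb_submod : submod_closed linb.
Proof.
split.
  by apply/asboolP => a x y /=; rewrite ?fctE scaler0 addr0.
move=> k f g /asboolP lf /asboolP lg; apply/asboolP => a x y /=.
rewrite !fctE lf lg !scalerDr !scalerA [k * a]mulrC.
by rewrite -!addrA; congr (_ + _); rewrite addrCA.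
Qed.
HB.instance Definition _ := GRing.isSubmodClosed.Build K (U -> V) linb linb_submod.
HB.instance Definition _ := [SubChoice_isSubLmodule of khom by <:].

Definition hom_of (h : U -> V) : khom := insubd (0 : khom) h.
End Hom.

Arguments hom_of {K U V} h.

Definition bilin (K : fieldType) (U V W : lmodType K) (b : U -> V -> W) : Prop :=
  (forall x, linear (b x)) /\ (forall y, linear (fun x => b x y)).

Definition trilin (K : fieldType) (U V P W : lmodType K) (t : U -> V -> P -> W)
  : Prop :=
  [/\ (forall x y, linear (t x y)), (forall x z, linear (fun y => t x y z))
    & (forall y z, linear (fun x => t x y z))].

(* Elements of a tensor product U (x) V are written as finite formal sums,   *)
(* i.e. sequences of pairs (Sweedler notation); two such expressions denote  *)
(* the same tensor iff every bilinear map (into any K-space) takes the same  *)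
(* value on them.  All axioms below are stated through arbitrary multilinear *)
(* maps, which is exactly equality in the (iterated) tensor product.         *)

Local Unset Implicit Arguments.
Section Entwining.
Variables (K : fieldType) (A : algType K) (Obj : Type)
  (C : Obj -> Obj -> lmodType K)
  (delta : forall X Y Z : Obj, C X Z -> seq (C Y Z * C X Y))
  (eps : forall X : Obj, C X X -> K)
  (psi : forall X Y : Obj, C X Y -> A -> seq (A * C X Y)).

Definition coalgebra_axioms : Prop :=
  [/\
      (forall X, linear (eps X : C X X -> K^o)),
      (forall (X Y Z : Obj) (W : lmodType K) (b : C Y Z -> C X Y -> W),
          bilin b -> linear (fun f => \sum_(p <- delta X Y Z f) b p.1 p.2)),
      (forall (X Y Z V : Obj) (W : lmodType K)
              (t : C Z V -> C Y Z -> C X Y -> W), trilin t ->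
         forall f : C X V,
           \sum_(p <- delta X Y V f) \sum_(q <- delta Y Z V p.1) t q.1 q.2 p.2
         = \sum_(p <- delta X Z V f) \sum_(q <- delta X Y Z p.2) t p.1 q.1 q.2)
    &
      (forall (X Y : Obj) (f : C X Y),
         \sum_(p <- delta X Y Y f) eps Y p.1 *: p.2 = f /\
         \sum_(p <- delta X X Y f) eps X p.2 *: p.1 = f)].

Definition entwining_axioms : Prop :=
  coalgebra_axioms /\
  [/\
      (forall (X Y : Obj) (W : lmodType K) (b : A -> C X Y -> W), bilin b ->
         bilin (fun (f : C X Y) (a : A) => \sum_(p <- psi X Y f a) b p.1 p.2)),
      (forall (X Y Z : Obj) (W : lmodType K) (t : A -> C Y Z -> C X Y -> W),
         trilin t -> forall (f : C X Z) (a : A),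
           \sum_(p <- psi X Z f a) \sum_(q <- delta X Y Z p.2) t p.1 q.1 q.2
         = \sum_(p <- delta X Y Z f) \sum_(q <- psi X Y p.2 a)
              \sum_(r <- psi Y Z p.1 q.1) t r.1 r.2 q.2),
      (forall (X Y : Obj) (W : lmodType K) (b : A -> C X Y -> W), bilin b ->
         forall (f : C X Y) (a a' : A),
           \sum_(p <- psi X Y f (a * a')) b p.1 p.2
         = \sum_(p <- psi X Y f a) \sum_(q <- psi X Y p.2 a') b (p.1 * q.1) q.2),
      (forall (X Y : Obj) (W : lmodType K) (b : A -> C X Y -> W), bilin b ->
         forall f : C X Y, \sum_(p <- psi X Y f 1) b p.1 p.2 = b 1 f)
    &
      (forall (Z : Obj) (g : C Z Z) (a : A),
         \sum_(p <- psi Z Z g a) eps Z p.2 *: p.1 = eps Z g *: a)].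

(* Left C-contramodules: M(X) a K-space, pi_{XY} : (C(X,Y), M(Y)) -> M(X).  *)
Record contramod := Contra {
  cM : Obj -> lmodType K;
  cpi : forall X Y : Obj, khom (khom (C X Y) (cM Y)) (cM X) }.

Definition is_contra (M : contramod) : Prop :=
  (* coassociativity, with (C(X,Y),C(Y,Z),M(Z)) = (C(Y,Z) (x) C(X,Y), M(Z)) *)
  (forall (X Y Z : Obj) (g : khom (C X Y) (khom (C Y Z) (cM M Z))),
     cpi M X Y (hom_of (fun c : C X Y => cpi M Y Z (g c)))
     = cpi M X Z (hom_of (fun f : C X Z =>
                     \sum_(p <- delta X Y Z f) g p.2 p.1))) /\
  (forall (X : Obj) (m : cM M X),
     cpi M X X (hom_of (fun f : C X X => eps X f *: m)) = m).

Definition is_contra_morph (M N : contramod) (phi : forall X, khom (cM M X) (cM N X))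
  : Prop :=
  forall (X Y : Obj) (g : khom (C X Y) (cM M Y)),
    phi X (cpi M X Y g) = cpi N X Y (hom_of (fun c : C X Y => phi Y (g c))).

(* S_psi T_psi (M): X |-> (A, M(X)) with structure (A, pi_{XY}) o (psi_{XY}, M(Y)) *)
Definition ST (M : contramod) : contramod :=
  Contra (fun X => khom A (cM M X))
    (fun X Y => hom_of (fun G : khom (C X Y) (khom A (cM M Y)) =>
       hom_of (fun a : A =>
         cpi M X Y (hom_of (fun c : C X Y =>
            \sum_(p <- psi X Y c a) G p.2 p.1))))).

(* H_X^U : Y |-> (C(Y,X), U), structure induced by delta_{YZX} *)
Definition Hc (X : Obj) (U : lmodType K) : contramod :=
  Contra (fun Y => khom (C Y X) U)
    (fun Y Z => hom_of (fun g : khom (C Y Z) (khom (C Z X) U) =>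
       hom_of (fun f : C Y X => \sum_(p <- delta Y Z X f) g p.2 p.1))).

Definition natT := forall (M : contramod) (X : Obj), khom (cM M X) (khom A (cM M X)).

Definition is_nat (tau : natT) : Prop :=
  (forall M : contramod, is_contra M -> is_contra_morph M (ST M) (tau M))
  /\
  (forall (M N : contramod) (phi : forall X, khom (cM M X) (cM N X)),
     is_contra M -> is_contra N -> is_contra_morph M N phi ->
     forall (X : Obj) (m : cM M X) (a : A),
       tau N X (phi X m) a = phi X (tau M X m a)).

(* V_1: sigma_X : C(X,X) (x) A -> K, i.e. bilinear maps C(X,X) x A -> K *)
Definition sigmaT := forall X : Obj, C X X -> A -> K.

Definition is_V1 (sigma : sigmaT) : Prop :=
  (forall X, bilin (sigma X : C X X -> A -> K^o)) /\
  (forall (X Y : Obj) (f : C X Y) (a : A),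
     \sum_(p <- delta X Y Y f) \sum_(q <- psi X Y p.2 a) sigma Y p.1 q.1 *: q.2
     = \sum_(p <- delta X X Y f) sigma X p.2 a *: p.1).

Definition alpha (sigma : sigmaT) : natT :=
  fun M X => hom_of (fun m : cM M X =>
    hom_of (fun a : A =>
      cpi M X X (hom_of (fun f : C X X => sigma X f a *: m)))).

Definition eps_hom (X : Obj) (U : lmodType K) (u : U) : khom (C X X) U :=
  hom_of (fun c : C X X => eps X c *: u).

(* beta(tau): the case U = K of (sigma_X, U) = tau(H_X^U)(X) o (eps_X, U) *)
Definition beta (tau : natT) : sigmaT :=
  fun X f a => (tau (Hc X K^o) X (eps_hom X K^o 1) : khom A (khom (C X X) K^o)) a f.

End Entwining.

From HB Require Import structures.
From mathcomp Require Import all_boot all_algebra.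
From mathcomp Require Import boolp classical_sets functions.
From mathcomp Require Import ring.

(* For g : C(X,Y) -> M(Y), coassociativity of the contraaction turns both
   alpha(sigma)(pi_XY g) and pi^{ST}_XY(alpha(sigma) o g) into pi_XY applied to
   g composed with one of the two sides of the V_1 identity, so alpha(sigma) is
   a morphism M -> S T M.  Conversely H_X^K is the free contramodule on eps_X in
   degree X, so naturality of tau along the morphism H_X^K -> M classifying
   m : M(X) forces tau(M)(X)(m) = alpha(beta tau)(M)(X)(m); evaluating the
   morphism property of tau on H_Y^{C(X,Y)} at the identity of C(X,Y) then
   shows that beta(tau) lies in V_1. *)

Set Implicit Arguments. Unset Strict Implicit. Unset Printing Implicit Defensive.
Import GRing.Theory.
Local Open Scope ring_scope.

Section KHom.
Variable K : fieldType.

Section KHomLinear.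
Variables (U V : lmodType K) (f : khom U V).

Lemma khom_linear : linear f.
Proof. by apply/asboolP; case: f. Qed.

HB.instance Definition _ := GRing.isLinear.Build K U V *:%R f khom_linear.

End KHomLinear.

Implicit Types U V W : lmodType K.

Lemma khomP U V (f g : khom U V) : f =1 g -> f = g.
Proof. by move=> fg; apply: val_inj; apply: funext. Qed.

Lemma hom_ofE U V (h : U -> V) : linear h -> hom_of h =1 h.
Proof. by move=> lh x; rewrite /hom_of insubdK //; apply/asboolP. Qed.

Lemma eq_hom_of U V (h1 h2 : U -> V) : h1 =1 h2 -> hom_of h1 = hom_of h2.
Proof. by move=> e; congr hom_of; apply: funext. Qed.

Lemma khom_addE U V (f g : khom U V) x : (f + g) x = f x + g x.
Proof. by []. Qed.

Lemma khom_scaleE U V k (f : khom U V) x : (k *: f) x = k *: f x.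
Proof. by []. Qed.

Lemma khom_sumE U V I (s : seq I) (F : I -> khom U V) x :
  (\sum_(i <- s) F i) x = \sum_(i <- s) F i x.
Proof.
elim: s => [|i s IHs]; first by rewrite !big_nil.
by rewrite !big_cons khom_addE IHs.
Qed.

Lemma bilin_flip U V W (F : W -> U -> V) : bilin F -> bilin (fun u w => F w u).
Proof. by case=> F1 F2; split. Qed.

Lemma bilin_khom U V W (g : khom U (khom V W)) : bilin (fun u v => g u v).
Proof. by split=> [u|v] k x y; rewrite linearP. Qed.

Lemma linear_hom_of W U V (F : W -> U -> V) :
  bilin F -> linear (fun w => hom_of (F w)).
Proof.
case=> F1 F2 k x y; apply: khomP => u.
by rewrite khom_addE khom_scaleE !hom_ofE //; apply: F2.
Qed.

Lemma hom_of2E W U V (F : W -> U -> V) (HF : bilin F) w u :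
  hom_of (fun w => hom_of (F w)) w u = F w u.
Proof.
by rewrite hom_ofE ?hom_ofE //; [case: HF | apply: linear_hom_of].
Qed.

Lemma linear_scale_l U V (phi : U -> K^o) (v : V) :
  linear phi -> linear (fun x => phi x *: v).
Proof. by move=> lphi k x y; rewrite lphi scalerDl scalerA. Qed.

Lemma linear_scale_r U V (c : K) (g : khom U V) : linear (fun x => c *: g x).
Proof. by move=> k x y; rewrite linearP scalerDr !scalerA mulrC. Qed.

Lemma linear_comp U V W (f : khom V W) (g : khom U V) : linear (fun x => f (g x)).
Proof. by move=> k x y; rewrite !linearP. Qed.

Lemma linear_comp_hom_of W U V P (g : khom (khom U V) P) (F : W -> U -> V) :
  bilin F -> linear (fun w => g (hom_of (F w))).
Proof. by move=> HF k x y; rewrite (linear_hom_of HF) linearP. Qed.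

Lemma linear_sum_fun U V I (s : seq I) (F : I -> U -> V) :
  (forall i, linear (F i)) -> linear (fun x => \sum_(i <- s) F i x).
Proof.
move=> lF k x y; rewrite scaler_sumr -big_split /=.
by apply: eq_bigr => i _; rewrite lF.
Qed.

End KHom.

Section Contramodules.
Variables (K : fieldType) (Obj : Type) (C : Obj -> Obj -> lmodType K)
  (delta : forall X Y Z : Obj, C X Z -> seq (C Y Z * C X Y))
  (eps : forall X : Obj, C X X -> K).
Arguments delta : clear implicits.
Arguments eps : clear implicits.
Hypothesis coalgC : coalgebra_axioms K Obj C delta eps.

Local Notation contramod := (contramod K Obj C).
Local Notation cM := (cM K Obj C).
Local Notation cpi := (cpi K Obj C).
Local Notation Hc := (Hc K Obj C delta).
Local Notation is_contra := (is_contra K Obj C delta eps).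
Local Notation is_contra_morph := (is_contra_morph K Obj C).
Local Notation eps_hom := (eps_hom K Obj C eps).

Lemma eps_linear X : linear (eps X : C X X -> K^o).
Proof. by case: coalgC. Qed.

Lemma delta_linear X Y Z (W : lmodType K) (b : C Y Z -> C X Y -> W) :
  bilin b -> linear (fun f => \sum_(p <- delta X Y Z f) b p.1 p.2).
Proof. by case: coalgC => _ H _ _; apply: H. Qed.

Lemma delta_coassoc X Y Z V (W : lmodType K) (t : C Z V -> C Y Z -> C X Y -> W) :
  trilin t -> forall f : C X V,
   \sum_(p <- delta X Y V f) \sum_(q <- delta Y Z V p.1) t q.1 q.2 p.2
 = \sum_(p <- delta X Z V f) \sum_(q <- delta X Y Z p.2) t p.1 q.1 q.2.
Proof. by case: coalgC => _ _ H _; apply: H. Qed.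

Lemma delta_counitl X Y (f : C X Y) : \sum_(p <- delta X Y Y f) eps Y p.1 *: p.2 = f.
Proof. by case: coalgC => _ _ _ H; case: (H X Y f). Qed.

Lemma delta_counitr X Y (f : C X Y) : \sum_(p <- delta X X Y f) eps X p.2 *: p.1 = f.
Proof. by case: coalgC => _ _ _ H; case: (H X Y f). Qed.

Lemma eps_homE X (U : lmodType K) (u : U) c : eps_hom X U u c = eps X c *: u.
Proof. by rewrite hom_ofE //; apply/linear_scale_l/eps_linear. Qed.

Lemma eps_hom_linear X (U : lmodType K) : linear (eps_hom X U).
Proof.
move=> k x y; apply: khomP => d.
by rewrite khom_addE khom_scaleE !eps_homE scalerDr !scalerA mulrC.
Qed.

Lemma Hc_cpiE X (U : lmodType K) Y Z (g : khom (C Y Z) (khom (C Z X) U)) f :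
  cpi (Hc X U) Y Z g f = \sum_(p <- delta Y Z X f) g p.2 p.1.
Proof.
apply: hom_of2E; split=> [g'|f'].
  exact: (delta_linear (bilin_flip (bilin_khom g'))).
by move=> k x y; rewrite scaler_sumr -big_split.
Qed.

Lemma contra_coassoc (M : contramod) X Y Z (h : C Y Z -> C X Y -> cM M Z) :
  is_contra M -> bilin h ->
  cpi M X Y (hom_of (fun c => cpi M Y Z (hom_of (fun d => h d c))))
  = cpi M X Z (hom_of (fun f => \sum_(p <- delta X Y Z f) h p.1 p.2)).
Proof.
move=> [coassM _] hh; have hh' := bilin_flip hh.
pose g := hom_of (fun c => hom_of (fun d => h d c)).
have gE c : cpi M Y Z (g c) = cpi M Y Z (hom_of (fun d => h d c)).
  by congr (_ _); apply: hom_ofE; apply: linear_hom_of.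
rewrite -(eq_hom_of gE) coassM; congr (_ _); apply: eq_hom_of => f.
by apply: eq_bigr => p _; rewrite hom_of2E.
Qed.

Lemma Hc_contra X (U : lmodType K) : is_contra (Hc X U).
Proof.
split=> [Y Z V g | Y m]; apply: khomP => f; rewrite Hc_cpiE.
  have lin_gc := linear_comp (cpi (Hc X U) Z V) g.
  have lin_delta_g := delta_linear (bilin_flip (bilin_khom g)).
  rewrite Hc_cpiE.
  under eq_bigr => p _ do rewrite hom_ofE // Hc_cpiE.
  under [RHS]eq_bigr => p _ do rewrite hom_ofE // khom_sumE.
  apply: (delta_coassoc (t := fun z y x => g x y z)).
  by split=> [x y|x z|y z] k a b; rewrite !linearP.
have lin_eps_m := linear_scale_l m (@eps_linear Y).
under eq_bigr => p _ do rewrite hom_ofE // khom_scaleE.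
by rewrite -[in RHS](delta_counitr f) linear_sum; apply: eq_bigr => p _; rewrite linearZ.
Qed.

Definition yoneda (M : contramod) X (m : cM M X) Y : khom (cM (Hc X K^o) Y) (cM M Y) :=
  hom_of (fun ph : khom (C Y X) K^o => cpi M Y X (hom_of (fun c => ph c *: m))).

Lemma yonedaE (M : contramod) X (m : cM M X) Y ph :
  yoneda m Y ph = cpi M Y X (hom_of (fun c => ph c *: m)).
Proof.
apply: hom_ofE; apply: linear_comp_hom_of; split=> [ph'|c].
  exact/linear_scale_l/khom_linear.
by move=> k x y; rewrite scalerDl scalerA.
Qed.

Lemma yoneda_morph (M : contramod) X (m : cM M X) :
  is_contra M -> is_contra_morph (Hc X K^o) M (yoneda m).
Proof.
move=> HM Y Z g; rewrite yonedaE.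
have lin_gm : forall c, linear (fun d => g c d *: m).
  by move=> c; exact/linear_scale_l/khom_linear.
have lin_g : forall d, linear (fun c => g c d) by case: (bilin_khom g).
rewrite (eq_hom_of (fun c => yonedaE m (g c))).
rewrite (contra_coassoc (h := fun d c => g c d *: m)) //; last first.
  by split=> // d; apply: linear_scale_l.
by congr (_ _); apply: eq_hom_of => f; rewrite Hc_cpiE scaler_suml.
Qed.

Lemma yoneda_eps (M : contramod) X (m : cM M X) :
  is_contra M -> yoneda m X (eps_hom X K^o 1) = m.
Proof.
move=> [_ counitM]; rewrite yonedaE -[RHS]counitM; congr (_ _).
by apply: eq_hom_of => c; rewrite eps_homE [_ *: 1]mulr1.
Qed.

End Contramodules.

Section Entwining.
Variables (K : fieldType) (A : algType K) (Obj : Type) (C : Obj -> Obj -> lmodType K)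
  (delta : forall X Y Z : Obj, C X Z -> seq (C Y Z * C X Y))
  (eps : forall X : Obj, C X X -> K)
  (psi : forall X Y : Obj, C X Y -> A -> seq (A * C X Y)).
Arguments delta : clear implicits.
Arguments eps : clear implicits.
Arguments psi : clear implicits.
Hypothesis coalgC : coalgebra_axioms K Obj C delta eps.
Hypothesis psi_bilin : forall (X Y : Obj) (W : lmodType K) (b : A -> C X Y -> W),
  bilin b -> bilin (fun (f : C X Y) (a : A) => \sum_(p <- psi X Y f a) b p.1 p.2).

Local Notation contramod := (contramod K Obj C).
Local Notation cM := (cM K Obj C).
Local Notation cpi := (cpi K Obj C).
Local Notation Hc := (Hc K Obj C delta).
Local Notation ST := (ST K A Obj C psi).
Local Notation is_contra := (is_contra K Obj C delta eps).
Local Notation is_contra_morph := (is_contra_morph K Obj C).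
Local Notation eps_hom := (eps_hom K Obj C eps).
Local Notation sigmaT := (sigmaT K A Obj C).
Local Notation natT := (natT K A Obj C).
Local Notation alpha := (alpha K A Obj C).
Local Notation beta := (beta K A Obj C delta eps).
Local Notation is_V1 := (is_V1 K A Obj C delta psi).
Local Notation is_nat := (is_nat K A Obj C delta eps psi).

Lemma bilin_psi_khom (W : lmodType K) X Y (G : khom (C X Y) (khom A W)) :
  bilin (fun c a => \sum_(p <- psi X Y c a) G p.2 p.1).
Proof. exact: (psi_bilin (bilin_flip (bilin_khom G))). Qed.

Lemma ST_cpiE (M : contramod) X Y (G : khom (C X Y) (khom A (cM M Y))) a :
  cpi (ST M) X Y G a
  = cpi M X Y (hom_of (fun c => \sum_(p <- psi X Y c a) G p.2 p.1)).
Proof.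
apply: hom_of2E; split=> [G' | a']; apply: linear_comp_hom_of.
  exact/bilin_flip/(bilin_psi_khom (G' : khom _ (khom A (cM M Y)))).
split=> [G' | c]; first by case: (bilin_psi_khom (G' : khom _ (khom A (cM M Y)))).
by move=> k x y; rewrite scaler_sumr -big_split.
Qed.

Section Alpha.
Variable sigma : sigmaT.
Arguments sigma : clear implicits.
Hypothesis sigma_bilin : forall X, bilin (sigma X : C X X -> A -> K^o).

Lemma linear_sigma_scale_l X a (U : lmodType K) (u : U) :
  linear (fun f => sigma X f a *: u).
Proof. by apply: linear_scale_l; case: (sigma_bilin X). Qed.

Lemma linear_sigma_scale_r X f (U : lmodType K) (u : U) :
  linear (fun a => sigma X f a *: u).
Proof. by apply: linear_scale_l; case: (sigma_bilin X). Qed.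

Lemma alphaE (M : contramod) X (m : cM M X) a :
  alpha sigma M X m a = cpi M X X (hom_of (fun f => sigma X f a *: m)).
Proof.
have lin_m f a' : linear (fun m' : cM M X => sigma X f a' *: m').
  by move=> k x y; rewrite scalerDr !scalerA mulrC.
apply: hom_of2E; split=> [m' | a']; apply: linear_comp_hom_of; split=> *;
  by [apply: linear_sigma_scale_l | apply: linear_sigma_scale_r | apply: lin_m].
Qed.

Lemma alpha_natural (M N : contramod) (phi : forall X, khom (cM M X) (cM N X)) :
  is_contra_morph M N phi ->
  forall X (m : cM M X) a, alpha sigma N X (phi X m) a = phi X (alpha sigma M X m a).
Proof.
move=> Hphi X m a; rewrite !alphaE Hphi; congr (_ _); apply: eq_hom_of => f.
by rewrite hom_ofE ?linearZ //; apply: linear_sigma_scale_l.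
Qed.

Lemma alpha_Hc_eps X (U : lmodType K) (u : U) a f :
  alpha sigma (Hc X U) X (eps_hom X U u) a f = sigma X f a *: u.
Proof.
have lin_f : linear (fun f' => sigma X f' a : K^o) by case: (sigma_bilin X).
rewrite alphaE (Hc_cpiE coalgC).
have lin_u : linear (fun f' => sigma X f' a *: eps_hom X U u).
  exact: linear_sigma_scale_l.
under eq_bigr => p _ do rewrite hom_ofE // khom_scaleE (eps_homE coalgC) scalerA.
rewrite -scaler_suml -{2}(delta_counitl coalgC f) -(hom_ofE lin_f) linear_sum.
by congr (_ *: u); apply: eq_bigr => p _; rewrite linearZ /= hom_ofE // mulrC.
Qed.

Lemma beta_alpha X f a : beta (alpha sigma) X f a = sigma X f a.
Proof. by rewrite /beta alpha_Hc_eps [_ *: 1]mulr1. Qed.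

Lemma alpha_cpiE (M : contramod) X Y (g : khom (C X Y) (cM M Y)) a :
  is_contra M ->
  alpha sigma M X (cpi M X Y g) a
  = cpi M X Y (hom_of (fun f => g (\sum_(p <- delta X X Y f) sigma X p.2 a *: p.1))).
Proof.
move=> HM; rewrite alphaE.
have scale_g d : sigma X d a *: cpi M X Y g
                 = cpi M X Y (hom_of (fun c => sigma X d a *: g c)).
  rewrite -linearZ; congr (_ _); apply: khomP => c.
  by rewrite hom_ofE //; apply: linear_scale_r.
rewrite (eq_hom_of scale_g) (contra_coassoc (h := fun c d => sigma X d a *: g c) HM) //.
  by congr (_ _); apply: eq_hom_of => f; rewrite linear_sum; apply: eq_bigr => p _; rewrite linearZ.
by split=> [c | d]; [apply: linear_sigma_scale_l | apply: linear_scale_r].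
Qed.

Lemma ST_cpi_alphaE (M : contramod) X Y (g : khom (C X Y) (cM M Y)) a :
  is_contra M ->
  cpi (ST M) X Y (hom_of (fun c => alpha sigma M Y (g c))) a
  = cpi M X Y (hom_of (fun f => g (\sum_(p <- delta X Y Y f)
                                    \sum_(q <- psi X Y p.2 a) sigma Y p.1 q.1 *: q.2))).
Proof.
move=> HM; rewrite ST_cpiE.
pose h d c := \sum_(q <- psi X Y c a) sigma Y d q.1 *: g q.2.
have hh : bilin h.
  split=> [d | c]; last by apply: linear_sum_fun => q; apply: linear_sigma_scale_l.
  have hb : bilin (fun a' c' => sigma Y d a' *: g c').
    by split=> [a' | c']; [apply: linear_scale_r | apply: linear_sigma_scale_r].
  by case: (psi_bilin hb) => _; apply.
have inner c : \sum_(q <- psi X Y c a) hom_of (fun c' => alpha sigma M Y (g c')) q.2 q.1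
               = cpi M Y Y (hom_of (fun d => h d c)).
  have lin_ag := linear_comp (alpha sigma M Y) g.
  under eq_bigr => q _ do rewrite hom_ofE // alphaE.
  rewrite -linear_sum; congr (_ _); apply: khomP => d.
  rewrite khom_sumE hom_ofE; last by case: hh.
  by apply: eq_bigr => q _; rewrite hom_ofE //; apply: linear_sigma_scale_l.
rewrite (eq_hom_of inner) (contra_coassoc HM hh); congr (_ _); apply: eq_hom_of => f.
rewrite linear_sum; apply: eq_bigr => p _.
by rewrite linear_sum; apply: eq_bigr => q _; rewrite linearZ.
Qed.

Hypothesis sigma_comod : forall X Y (f : C X Y) a,
  \sum_(p <- delta X Y Y f) \sum_(q <- psi X Y p.2 a) sigma Y p.1 q.1 *: q.2
  = \sum_(p <- delta X X Y f) sigma X p.2 a *: p.1.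

Lemma alpha_contra_morph (M : contramod) :
  is_contra M -> is_contra_morph M (ST M) (alpha sigma M).
Proof.
move=> HM X Y g; apply: khomP => a; rewrite alpha_cpiE // ST_cpi_alphaE //.
by congr (_ _); apply: eq_hom_of => f; rewrite sigma_comod.
Qed.

End Alpha.

Lemma alpha_nat (sigma : sigmaT) : is_V1 sigma -> is_nat (alpha sigma).
Proof.
case=> sigma_bilin sigma_comod; split=> [M HM | M N phi _ _ Hphi].
  exact: alpha_contra_morph.
exact: alpha_natural.
Qed.

Lemma bilin_scale_add (sigma sigma' : sigmaT) (k : K) :
  (forall X, bilin (sigma X : C X X -> A -> K^o)) ->
  (forall X, bilin (sigma' X : C X X -> A -> K^o)) ->
  forall X, bilin ((fun Y f a => k * sigma Y f a + sigma' Y f a) X : C X X -> A -> K^o).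
Proof.
move=> Hs Hs' X; case: (Hs X) => Hs1 Hs2; case: (Hs' X) => Hs1' Hs2'.
split=> [f | a] c x y /=; rewrite ?Hs1 ?Hs1' ?Hs2 ?Hs2' /GRing.scale /=; ring.
Qed.

Lemma alpha_scale_add (sigma sigma' : sigmaT) (k : K) :
  (forall X, bilin (sigma X : C X X -> A -> K^o)) ->
  (forall X, bilin (sigma' X : C X X -> A -> K^o)) ->
  forall (M : contramod) X (m : cM M X),
  alpha (fun Y f a => k * sigma Y f a + sigma' Y f a) M X m
  = k *: alpha sigma M X m + alpha sigma' M X m.
Proof.
move=> Hs Hs' M X m; apply: khomP => a.
rewrite khom_addE khom_scaleE !alphaE //; last exact: bilin_scale_add.
rewrite -(linearP (cpi M X X)); congr (_ _); apply: khomP => f.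
rewrite khom_addE khom_scaleE !hom_ofE; first by rewrite scalerDl scalerA.
- exact: linear_sigma_scale_l.
- exact: linear_sigma_scale_l.
- apply: (linear_sigma_scale_l (sigma := fun Y f a => k * sigma Y f a + sigma' Y f a)).
  exact: bilin_scale_add.
Qed.

Section Beta.
Variable tau : natT.
Hypothesis tau_nat : is_nat tau.

Lemma beta_bilin X : bilin (beta tau X : C X X -> A -> K^o).
Proof. by split=> [f | a] k x y; rewrite /beta linearP. Qed.

Lemma alpha_beta (M : contramod) X (m : cM M X) :
  is_contra M -> alpha (beta tau) M X m = tau M X m.
Proof.
move=> HM; apply: khomP => a; rewrite alphaE; last exact: beta_bilin.
have [_ tau_natural] := tau_nat.
rewrite -[in RHS](yoneda_eps coalgC m HM).
rewrite (tau_natural _ _ _ (Hc_contra coalgC X K^o) HM (yoneda_morph coalgC m HM)).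
by rewrite yonedaE.
Qed.

Lemma tau_Hc_eps X (U : lmodType K) (u : U) a f :
  tau (Hc X U) X (eps_hom X U u) a f = beta tau X f a *: u.
Proof.
rewrite -alpha_beta ?alpha_Hc_eps //; first exact: beta_bilin.
exact: Hc_contra.
Qed.

Lemma beta_V1 : is_V1 (beta tau).
Proof.
split=> [|X Y f a]; first exact: beta_bilin.
pose M := Hc Y (C X Y).
have HM : is_contra M := Hc_contra coalgC Y (C X Y).
pose m : cM M X := hom_of id.
have mE h : m h = h by rewrite hom_ofE.
pose g : khom (C X Y) (cM M Y) := hom_of (eps_hom Y (C X Y)).
have gE c : g c = eps_hom Y (C X Y) c.
  by apply: hom_ofE; apply: (eps_hom_linear coalgC).
have m_cpi : m = cpi M X Y g.
  apply: khomP => h; rewrite (Hc_cpiE coalgC) mE -[LHS](delta_counitl coalgC h).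
  by apply: eq_bigr => p _; rewrite gE (eps_homE coalgC).
transitivity (tau M X m a f).
  rewrite m_cpi (proj1 tau_nat M HM X Y g) ST_cpiE (Hc_cpiE coalgC).
  apply: eq_bigr => p _; rewrite hom_ofE; last first.
    by case: (bilin_psi_khom (hom_of (fun c => tau M Y (g c)))) => _; apply.
  have lin_tg := linear_comp (tau M Y) g.
  rewrite khom_sumE; apply: eq_bigr => q _.
  by rewrite hom_ofE // gE tau_Hc_eps.
rewrite -alpha_beta // alphaE; last exact: beta_bilin.
rewrite (Hc_cpiE coalgC); apply: eq_bigr => p _.
rewrite hom_ofE ?khom_scaleE ?mE //.
exact: (linear_sigma_scale_l (beta_bilin)).
Qed.
End Beta.

End Entwining.

Theorem proposition5p4
  (K : fieldType) (A : algType K) (Obj : Type)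
  (C : Obj -> Obj -> lmodType K)
  (delta : forall X Y Z : Obj, C X Z -> seq (C Y Z * C X Y))
  (eps : forall X : Obj, C X X -> K)
  (psi : forall X Y : Obj, C X Y -> A -> seq (A * C X Y))
  (Hent : entwining_axioms K A Obj C delta eps psi) :
  (* alpha maps V_1 into Nat(id, S_psi T_psi) *)
  (forall sigma : sigmaT K A Obj C, is_V1 K A Obj C delta psi sigma ->
     is_nat K A Obj C delta eps psi (alpha K A Obj C sigma))
  /\
  (* alpha is K-linear *)
  (forall (k : K) (sigma sigma' : sigmaT K A Obj C),
     is_V1 K A Obj C delta psi sigma -> is_V1 K A Obj C delta psi sigma' ->
     forall M : contramod K Obj C, is_contra K Obj C delta eps M ->
     forall (X : Obj) (m : cM K Obj C M X),
       alpha K A Obj C (fun Y f a => k * sigma Y f a + sigma' Y f a) M X m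
       = k *: alpha K A Obj C sigma M X m + alpha K A Obj C sigma' M X m)
  /\
  (* beta maps Nat(id, S_psi T_psi) into V_1 *)
  (forall tau : natT K A Obj C, is_nat K A Obj C delta eps psi tau ->
     is_V1 K A Obj C delta psi (beta K A Obj C delta eps tau))
  /\
  (* beta(tau) satisfies (sigma_X, U) = tau(H_X^U)(X) o (eps_X, U) for all U *)
  (forall tau : natT K A Obj C, is_nat K A Obj C delta eps psi tau ->
     forall (X : Obj) (U : lmodType K) (u : U) (a : A) (f : C X X),
       (tau (Hc K Obj C delta X U) X (eps_hom K Obj C eps X U u)
          : khom A (khom (C X X) U)) a f
       = beta K A Obj C delta eps tau X f a *: u)
  /\
  (* beta o alpha = id on V_1 *)
  (forall sigma : sigmaT K A Obj C, is_V1 K A Obj C delta psi sigma ->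
     forall (X : Obj) (f : C X X) (a : A),
       beta K A Obj C delta eps (alpha K A Obj C sigma) X f a = sigma X f a)
  /\
  (* alpha o beta = id on Nat(id, S_psi T_psi) *)
  (forall tau : natT K A Obj C, is_nat K A Obj C delta eps psi tau ->
     forall M : contramod K Obj C, is_contra K Obj C delta eps M ->
     forall (X : Obj) (m : cM K Obj C M X),
       alpha K A Obj C (beta K A Obj C delta eps tau) M X m = tau M X m).
Proof.
have [coalgC [psi_bilin _ _ _ _]] := Hent.
split; [|split; [|split; [|split; [|split]]]].
- by move=> sigma; apply: (alpha_nat eps psi_bilin).
- by move=> k sigma sigma' [Hs _] [Hs' _] M _; apply: alpha_scale_add.
- by move=> tau; apply: (beta_V1 coalgC psi_bilin).
- by move=> tau; apply: (tau_Hc_eps coalgC).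
- by move=> sigma [Hs _]; apply: (beta_alpha coalgC).
- by move=> tau Ht M HM X m; apply: (alpha_beta coalgC Ht m HM).
Qed.
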